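(* Let $\ell>0$. For any constant $C_0>0$ and any $\mu_0\in(0,\ell)$ there is some $\mu\in(0,\mu_0)$ such that, with $$\alpha:=\frac{\sqrt\ell-\sqrt\mu}{\sqrt\ell+\sqrt\mu},\qquad q(z)=\ell(z-\alpha)(z-1),\qquad r(z)=-(1+\alpha)z+\alpha,$$ one has $\sup_{\nu\in[\mu,\ell]}\rho\big(q(z)-\nu\, r(z)\big)<1-C_0\mu$.
   Context: For a polynomial $s(z)$, $\rho(s)$ denotes the maximum modulus of a (complex) root of $s$. *)

From HB Require Import structures.
From mathcomp Require Import all_boot all_order all_algebra.
From mathcomp Require Import complex.
From mathcomp Require Import classical_sets reals.
Set Implicit Arguments. Unset Strict Implicit. Unset Printing Implicit Defensive.
Import Order.TTheory GRing.Theory Num.Theory.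
Local Open Scope ring_scope.
Local Open Scope classical_set_scope.

Definition rho (R : realType) (s : {poly R[i]}) : R :=
  sup [set ComplexField.Normc.normc z | z in [set z : R[i] | root s z]].

Definition alpha (R : realType) (l mu : R) : R :=
  (Num.sqrt l - Num.sqrt mu) / (Num.sqrt l + Num.sqrt mu).

Definition q_hb (R : realType) (l mu : R) : {poly R[i]} :=
  (l%:C)%C%:P * ('X - ((alpha l mu)%:C)%C%:P) * ('X - 1).

Definition r_hb (R : realType) (l mu : R) : {poly R[i]} :=
  (- (1 + alpha l mu)%:C)%C%:P * 'X + ((alpha l mu)%:C)%C%:P.

From HB Require Import structures.
From mathcomp Require Import all_boot all_order all_algebra.
From mathcomp Require Import complex.
From mathcomp Require Import classical_sets reals.
From mathcomp Require Import ring lra.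
Import Order.TTheory GRing.Theory Num.Theory.
Local Open Scope ring_scope.
Local Open Scope classical_set_scope.

(* Put s := sqrt (mu / l), so that alpha = (1 - s) / (1 + s), and t := 1 - nu / l,
   which ranges over [0, 1 - s^2].  Then q - nu r = l (z^2 - t (1 + alpha) z + t alpha).
   A non-real root of this real quadratic has squared modulus t alpha <= (1 - s)^2;
   real roots lie in [-(1 - s), 1 - s] because the quadratic is nonnegative at
   +-(1 - s) and its vertex lies between them.  Hence the supremum is at most
   1 - s, and 1 - s < 1 - C0 mu as soon as sqrt mu < 1 / (C0 sqrt l). *)

Lemma sup_le_ge0 {R : realType} (E : set R) (b : R) :
  0 <= b -> ubound E b -> sup E <= b.
Proof.
move=> b_ge0 Eb; have [->|/set0P E_neq0] := eqVneq E set0; first by rewrite sup0.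
exact: ge_sup.
Qed.

Lemma rho_le {R : realType} (s : {poly R[i]}) (r : R) : 0 <= r ->
  (forall a b, root s (a +i* b)%C -> a ^+ 2 + b ^+ 2 <= r ^+ 2) -> rho s <= r.
Proof.
move=> r_ge0 roots_le; apply: sup_le_ge0 => // _ [[a b] /roots_le ab_le <-].
by rewrite /ComplexField.Normc.normc -(ger0_norm r_ge0) -sqrtr_sqr ler_wsqrtr.
Qed.

Lemma root_quadratic_ReIm {R : rcfType} (p c a b : R) :
  root ('X^2 - (p%:C)%C%:P * 'X + (c%:C)%C%:P) (a +i* b)%C ->
  a * a - b * b - p * a + c = 0 /\ b * (2 * a - p) = 0.
Proof.
rewrite /root !hornerE /= => /eqP z_root.
have /= re_eq := congr1 (@complex.Re R) z_root.
have /= im_eq := congr1 (@complex.Im R) z_root.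
by split; [apply: etrans re_eq | apply: etrans im_eq]; ring.
Qed.

Lemma quadratic_root_in_disk {R : realDomainType} (p c r a b : R) :
  0 <= c <= r ^+ 2 -> `|p| <= 2 * r ->
  0 <= r ^+ 2 - p * r + c -> 0 <= r ^+ 2 + p * r + c ->
  a * a - b * b - p * a + c = 0 -> b * (2 * a - p) = 0 ->
  a ^+ 2 + b ^+ 2 <= r ^+ 2.
Proof.
move=> /andP[c_ge0 c_le] p_le f_r_ge0 f_Nr_ge0 re_eq /eqP.
rewrite mulf_eq0 => /orP[/eqP b0 | /eqP/subr0_eq a_vertex]; last by nra.
have [p_le_2r Nr2_le_p] : p <= 2 * r /\ - (2 * r) <= p.
  by move: p_le; rewrite ler_norml => /andP[].
subst b; rewrite expr0n /= addr0.
(* With f x := x^2 - p x + c, f a - f r = (a - r) (a + r - p), and similarly at -r. *)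
have a_le : a <= r.
  rewrite leNgt; apply/negP => r_lt_a.
  have : 0 < (a - r) * (a + r - p) by apply: mulr_gt0; lra.
  nra.
have a_ge : - r <= a.
  rewrite leNgt; apply/negP => a_lt_Nr.
  have : 0 < (- r - a) * (p - a + r) by apply: mulr_gt0; lra.
  nra.
nra.
Qed.

Lemma hb_char_poly {R : realType} (l mu nu : R) : l != 0 ->
  q_hb l mu - (nu%:C)%C%:P * r_hb l mu =
  (l%:C)%C%:P * ('X^2 - (((1 - nu / l) * (1 + alpha l mu))%:C)%C%:P * 'X
                + (((1 - nu / l) * alpha l mu)%:C)%C%:P).
Proof.
move=> l_neq0; rewrite /q_hb /r_hb -[in LHS](divfK l_neq0 nu).
by rewrite !(rmorphB, rmorphD, rmorphM, rmorphN, rmorph1); ring.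
Qed.

Lemma alpha_sqrt_ratio {R : realType} (l mu : R) : 0 < l ->
  alpha l mu = (1 - Num.sqrt mu / Num.sqrt l) / (1 + Num.sqrt mu / Num.sqrt l).
Proof.
move=> l_gt0; have sl_gt0 : 0 < Num.sqrt l by rewrite sqrtr_gt0.
have sm_ge0 : 0 <= Num.sqrt mu := sqrtr_ge0 mu.
rewrite /alpha; field; apply/andP; split; rewrite gt_eqF //; lra.
Qed.

Lemma rho_hb_le {R : realType} (l mu nu : R) : 0 < mu -> mu <= nu <= l ->
  rho (q_hb l mu - (nu%:C)%C%:P * r_hb l mu) <= 1 - Num.sqrt mu / Num.sqrt l.
Proof.
move=> mu_gt0 /andP[mu_le_nu nu_le_l].
have l_gt0 : 0 < l by lra.
have l_neq0 : l != 0 by rewrite gt_eqF.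
set s := Num.sqrt mu / Num.sqrt l.
have s_gt0 : 0 < s by rewrite divr_gt0 ?sqrtr_gt0.
have s2 : s ^+ 2 = mu / l by rewrite expr_div_n !sqr_sqrtr // ltW.
have s_le1 : s <= 1.
  by rewrite ler_pdivrMr ?sqrtr_gt0 // mul1r ler_sqrt //; lra.
set t := 1 - nu / l; set al := alpha l mu.
have t_ge0 : 0 <= t by rewrite subr_ge0 ler_pdivrMr // mul1r.
have t_le : t <= 1 - s ^+ 2 by rewrite s2 lerD2l lerN2 ler_pM2r ?invr_gt0.
have al_s : al * (1 + s) = 1 - s.
  by rewrite /al alpha_sqrt_ratio // -/s divfK // gt_eqF //; lra.
have al_ge0 : 0 <= al by nra.
have tal : t * al * (1 + s) = t * (1 - s) by rewrite -mulrA al_s.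
apply: rho_le => [|a b]; first lra.
rewrite hb_char_poly // -/t -/al rootM rootC fmorph_eq0 (negbTE l_neq0) /=.
move=> /root_quadratic_ReIm [re_eq im_eq]; apply: quadratic_root_in_disk re_eq im_eq.
- apply/andP; split; first exact: mulr_ge0.
  nra.
- rewrite ger0_norm; nra.
- nra.
- nra.
Qed.

Lemma sup_rho_hb_le {R : realType} (l mu : R) : 0 < mu <= l ->
  sup [set rho (q_hb l mu - ((nu%:C)%C)%:P * r_hb l mu)
      | nu in [set nu : R | mu <= nu <= l]] <= 1 - Num.sqrt mu / Num.sqrt l.
Proof.
move=> /andP[mu_gt0 mu_le_l].
apply: sup_le_ge0 => [|_ [nu nu_in <-]]; last exact: rho_hb_le.
rewrite subr_ge0 ler_pdivrMr ?sqrtr_gt0 ?mul1r ?ler_sqrt //; lra.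
Qed.

Theorem proposition9 (R : realType) (l : R) (hl : 0 < l) :
  forall (C0 mu0 : R), 0 < C0 -> 0 < mu0 -> mu0 < l ->
  exists mu : R, 0 < mu /\ mu < mu0 /\
    sup [set rho (q_hb l mu - ((nu%:C)%C)%:P * r_hb l mu)
        | nu in [set nu : R | mu <= nu <= l]] < 1 - C0 * mu.
Proof.
move=> C0 mu0 C0_gt0 mu0_gt0 mu0_lt_l.
set w := Num.sqrt l; set m := Num.sqrt mu0.
have w_gt0 : 0 < w by rewrite sqrtr_gt0.
have m_gt0 : 0 < m by rewrite sqrtr_gt0.
have mm : m ^+ 2 = mu0 by rewrite sqr_sqrtr // ltW.
have ww : w ^+ 2 = l by rewrite sqr_sqrtr // ltW.
set v := Num.min (m / 2) (1 / (2 * C0 * w)).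
have v_gt0 : 0 < v by rewrite lt_min !divr_gt0 // ?mulr_gt0.
have v_le_m : v <= m / 2 by rewrite ge_min lexx.
have C0vw : C0 * v * w <= 1 / 2.
  have : v <= 1 / (2 * C0 * w) by rewrite ge_min lexx orbT.
  rewrite ler_pdivlMr ?mulr_gt0 //; lra.
exists (v ^+ 2); split; first exact: exprn_gt0.
split; first nra.
have mu_le_l : 0 < v ^+ 2 <= l by rewrite exprn_gt0 //=; nra.
apply: le_lt_trans (sup_rho_hb_le _ _ mu_le_l) _.
rewrite sqrtr_sqr ger0_norm ?ltW // -/w ltrD2l ltrN2.
rewrite ltr_pdivlMr //; nra.
Qed.
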